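(* Let $L\ge2$, $\rho>0$, and let $(\alpha_k)_{k\ge0}$ be nonnegative reals, not all zero, with $\bar\alpha:=\sum_{k\ge1}k\alpha_k\in(0,\infty)$, satisfying the fixed point equations $\alpha_{k+1}u_{k+1}=\rho\,\bar\alpha^{L-1}\alpha_k$ for all $k\ge0$, where $$u_k=k\sum_{k_2,\dots,k_L=1}^{\infty}\Big(\tfrac1k\wedge\tfrac1{k_2}\wedge\cdots\wedge\tfrac1{k_L}\Big)\prod_{i=2}^{L}k_i\alpha_{k_i},\quad k\ge1.$$ Then all $\alpha_k>0$, $\alpha_{k+1}/\alpha_k=\rho\bar\alpha^{L-1}/u_{k+1}$, and the sequence $(\alpha_k)$ is unimodal: it is increasing in $k$ as long as $u_{k+1}<\rho\bar\alpha^{L-1}$ and nonincreasing afterwards, so that its maximum is attained at $k_0=\max\{k>0:\ u_k<\rho\bar\alpha^{L-1}\}$ (with $k_0$ taken as $0$ if this set is empty).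
   Context: $a\wedge b$ denotes $\min(a,b)$. These are the mean-field fixed point equations for the stationary distribution $\alpha_k$ of the number of transfers on a link in a large symmetrical best-effort network with routes of length $L$ and link load $\rho$ under the min policy. *)

From Stdlib Require Import Reals Lra Lia ClassicalEpsilon.
Open Scope R_scope.

(* Value of a convergent real series  sum_{n>=0} f n  (0 by convention if it
   diverges; under the hypotheses of the theorem all series used converge). *)
Definition series (f : nat -> R) : R :=
  match excluded_middle_informative (exists l, infinite_sum f l) with
  | left H => proj1_sig (constructive_indefinite_description _ H)
  | right _ => 0
  end.

(* Hence nsum alpha (L-1) (1/k) =
     sum_{k_2,...,k_L >= 1} (1/k /\ 1/k_2 /\ ... /\ 1/k_L) prod_{i=2}^L k_i alpha_{k_i}
   (as an iterated sum of nonnegative terms). *)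
Fixpoint nsum (alpha : nat -> R) (j : nat) (m : R) : R :=
  match j with
  | O => m
  | S j' => series (fun n => INR (S n) * alpha (S n) * nsum alpha j' (Rmin m (/ INR (S n))))
  end.

Definition u (alpha : nat -> R) (L k : nat) : R :=
  INR k * nsum alpha (L - 1) (/ INR k).

(* Write c = rho * abar^(L-1).  The fixed point equations say
   alpha_(k+1) * u_(k+1) = c * alpha_k, so everything follows from two facts
   about the coefficients u_k:
   (1) u_k > 0, because the nested sum defining u_k is a convergent sum of
       nonnegative terms, at least one of them positive (abar > 0);
   (2) u_k is nondecreasing in k, because m |-> nsum alpha j m / m is
       nonincreasing: each summand  min(m, 1/n)  has this property, and it
       is preserved by the nested summation (induction on j).
   From (1) the recursion propagates positivity of alpha in both directions,
   gives the ratio formula, and makes alpha increase exactly when u_(k+1) < c.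
   Since k * alpha_k <= abar, alpha cannot increase forever, so by (2) the
   set {k > 0 | u_k < c} is an initial segment [1, k0] of the integers and
   alpha is unimodal with its maximum at k0. *)

From Stdlib Require Import Reals Lra Lia Classical ClassicalEpsilon.
Open Scope R_scope.

Lemma partial_sums_growing (f : nat -> R) :
  (forall n, 0 <= f n) -> Un_growing (sum_f_R0 f).
Proof. intros Hf n; simpl; specialize (Hf (S n)); lra. Qed.

Lemma constant_cv (B : R) : Un_cv (fun _ => B) B.
Proof.
  intros e He; exists 0%nat; intros n _.
  unfold Rdist; rewrite Rminus_diag, Rabs_R0; lra.
Qed.

Lemma infinite_sum_le_bound (f : nat -> R) (l B : R) :
  infinite_sum f l -> (forall n, sum_f_R0 f n <= B) -> l <= B.
Proof.
  intros Hl HB; exact (Rle_cv_lim HB Hl (constant_cv B)).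
Qed.

Lemma infinite_sum_scaled_le (f g : nat -> R) (lf lg a b : R) :
  infinite_sum f lf -> infinite_sum g lg ->
  (forall n, a * g n <= b * f n) -> a * lg <= b * lf.
Proof.
  intros Hf Hg Hfg.
  refine (Rle_cv_lim (Un := fun n => a * sum_f_R0 g n) (Vn := fun n => b * sum_f_R0 f n)
            _ (CV_mult _ _ _ _ (constant_cv a) Hg) (CV_mult _ _ _ _ (constant_cv b) Hf)).
  intros n; rewrite !scal_sum; apply sum_Rle; intros i _.
  rewrite (Rmult_comm (g i)), (Rmult_comm (f i)); apply Hfg.
Qed.

Lemma series_of_bounded (f : nat -> R) (B : R) :
  (forall n, 0 <= f n) -> (forall n, sum_f_R0 f n <= B) ->
  infinite_sum f (series f).
Proof.
  intros Hf HB.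
  assert (Hub : has_ub (sum_f_R0 f)) by (exists B; intros x [i ->]; apply HB).
  destruct (growing_cv _ (partial_sums_growing f Hf) Hub) as [l Hl].
  unfold series; destruct excluded_middle_informative as [Hex | Hnex].
  - destruct constructive_indefinite_description as [l' Hl']; exact Hl'.
  - exfalso; apply Hnex; exists l; exact Hl.
Qed.

Lemma term_le_partial_sum (f : nat -> R) (n : nat) :
  (forall n, 0 <= f n) -> f n <= sum_f_R0 f n.
Proof.
  intros Hf; destruct n as [|n]; simpl; [lra|].
  pose proof (cond_pos_sum f n Hf); lra.
Qed.

Lemma positive_term_of_positive_sum (f : nat -> R) (N : nat) :
  0 < sum_f_R0 f N -> exists i, 0 < f i.
Proof.
  intros Hsum; apply NNPP; intros Hno.
  assert (Hle : sum_f_R0 f N <= sum_f_R0 (fun _ => 0) N).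
  { apply sum_Rle; intros i _; apply Rnot_lt_le; intros Hi; apply Hno; exists i; exact Hi. }
  rewrite sum_cte in Hle; lra.
Qed.

Definition nsum_term (alpha : nat -> R) (j : nat) (m : R) (n : nat) : R :=
  INR (S n) * alpha (S n) * nsum alpha j (Rmin m (/ INR (S n))).

Lemma nsum_succ (alpha : nat -> R) (j : nat) (m : R) :
  nsum alpha (S j) m = series (nsum_term alpha j m).
Proof. reflexivity. Qed.

Lemma inv_succ_pos (n : nat) : 0 < / INR (S n).
Proof. apply Rinv_0_lt_compat, lt_0_INR; lia. Qed.

Definition ratio_antitone (g : R -> R) : Prop :=
  forall x y, 0 < x <= y -> x * g y <= y * g x.

(* Capping the argument at a level t > 0 preserves ratio antitonicity of a
   nonnegative function: this is the one-summand case of the nested sums. *)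
Lemma ratio_antitone_cap (g : R -> R) (t : R) :
  0 < t -> (forall x, 0 < x -> 0 <= g x) -> ratio_antitone g ->
  ratio_antitone (fun x => g (Rmin x t)).
Proof.
  intros Ht Hg Hratio x y Hxy; simpl.
  destruct (Rle_dec y t) as [Hyt | Hyt].
  - rewrite !Rmin_left by lra; apply Hratio; exact Hxy.
  - rewrite (Rmin_right y t) by lra.
    destruct (Rle_dec x t) as [Hxt | Hxt].
    + rewrite Rmin_left by lra.
      assert (x * g t <= t * g x) by (apply Hratio; lra).
      assert (0 <= g x) by (apply Hg; lra).
      nra.
    + rewrite Rmin_right by lra.
      assert (0 <= g t) by (apply Hg; lra).
      nra.
Qed.

Section NestedSum.

Variables (alpha : nat -> R) (abar : R).
Hypothesis alpha_nonneg : forall k, 0 <= alpha k.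
Hypothesis moment_bound : forall n, sum_f_R0 (fun k => INR k * alpha k) n <= abar.

Lemma weight_nonneg (n : nat) : 0 <= INR (S n) * alpha (S n).
Proof. apply Rmult_le_pos; [apply pos_INR | apply alpha_nonneg]. Qed.

Lemma abar_nonneg : 0 <= abar.
Proof. pose proof (moment_bound 0); simpl in *; lra. Qed.

Lemma weighted_sum_le (b : nat -> R) (B : R) :
  (forall n, 0 <= b n <= B) ->
  forall n, sum_f_R0 (fun i => INR (S i) * alpha (S i) * b i) n <= B * abar.
Proof.
  intros Hb n.
  assert (Hweights : sum_f_R0 (fun i => INR (S i) * alpha (S i)) n <= abar).
  { pose proof (moment_bound (S n)) as Hmom.
    rewrite (decomp_sum _ (S n)) in Hmom by lia; simpl in Hmom |- *; lra. }
  assert (HB : 0 <= B) by (destruct (Hb 0%nat); lra).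
  apply Rle_trans with (sum_f_R0 (fun i => INR (S i) * alpha (S i) * B) n).
  - apply sum_Rle; intros i _; apply Rmult_le_compat_l; [apply weight_nonneg | apply Hb].
  - rewrite <- scal_sum; apply Rmult_le_compat_l; assumption.
Qed.

Lemma nsum_succ_spec (j : nat) (m : R) :
  (forall x, 0 <= x -> 0 <= nsum alpha j x <= x * abar ^ j) -> 0 <= m ->
  infinite_sum (nsum_term alpha j m) (nsum alpha (S j) m) /\
  0 <= nsum alpha (S j) m <= m * abar ^ S j.
Proof.
  intros IH Hm.
  assert (Hcap : forall n, 0 <= Rmin m (/ INR (S n)) <= m).
  { intros n; split; [apply Rmin_glb; [lra | left; apply inv_succ_pos] | apply Rmin_l]. }
  assert (Hval : forall n, 0 <= nsum alpha j (Rmin m (/ INR (S n))) <= m * abar ^ j).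
  { intros n; destruct (Hcap n) as [H0 Hle]; destruct (IH _ H0) as [Hlo Hhi].
    pose proof (pow_le abar j abar_nonneg); split; [lra | nra]. }
  assert (Hterm : forall n, 0 <= nsum_term alpha j m n).
  { intros n; apply Rmult_le_pos; [apply weight_nonneg | apply Hval]. }
  assert (Hpartial : forall n, sum_f_R0 (nsum_term alpha j m) n <= m * abar ^ S j).
  { intros n; replace (m * abar ^ S j) with (m * abar ^ j * abar) by (simpl; ring).
    apply (weighted_sum_le (fun i => nsum alpha j (Rmin m (/ INR (S i))))); exact Hval. }
  pose proof (series_of_bounded _ _ Hterm Hpartial) as Hcv.
  rewrite nsum_succ; split; [exact Hcv | split].
  - apply Rle_trans with (sum_f_R0 (nsum_term alpha j m) 0); [apply Hterm |].
    exact (sum_incr _ 0 _ Hcv Hterm).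
  - exact (infinite_sum_le_bound _ _ _ Hcv Hpartial).
Qed.

Lemma nsum_bounds (j : nat) (m : R) : 0 <= m -> 0 <= nsum alpha j m <= m * abar ^ j.
Proof.
  revert m; induction j as [|j IH]; intros m Hm.
  - simpl; lra.
  - exact (proj2 (nsum_succ_spec j m IH Hm)).
Qed.

Lemma nsum_succ_converges (j : nat) (m : R) :
  0 <= m -> infinite_sum (nsum_term alpha j m) (nsum alpha (S j) m).
Proof. intros Hm; exact (proj1 (nsum_succ_spec j m (nsum_bounds j) Hm)). Qed.

Lemma nsum_ratio_antitone (j : nat) : ratio_antitone (nsum alpha j).
Proof.
  induction j as [|j IH]; intros m1 m2 Hm; [simpl; lra |].
  apply (infinite_sum_scaled_le (nsum_term alpha j m1) (nsum_term alpha j m2));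
    try (apply nsum_succ_converges; lra).
  intros n; unfold nsum_term.
  assert (Hcap : m1 * nsum alpha j (Rmin m2 (/ INR (S n)))
                 <= m2 * nsum alpha j (Rmin m1 (/ INR (S n)))).
  { apply (ratio_antitone_cap (nsum alpha j) _ (inv_succ_pos n)); [| exact IH | exact Hm].
    intros x Hx; apply nsum_bounds; lra. }
  pose proof (weight_nonneg n); nra.
Qed.

Hypothesis weight_pos : exists n, 0 < INR (S n) * alpha (S n).

Lemma nsum_pos (j : nat) (m : R) : 0 < m -> 0 < nsum alpha j m.
Proof.
  revert m; induction j as [|j IH]; intros m Hm; [simpl; lra |].
  destruct weight_pos as [n Hn].
  assert (Hterm : 0 < nsum_term alpha j m n).
  { apply Rmult_lt_0_compat; [exact Hn | apply IH, Rmin_pos; [lra | apply inv_succ_pos]]. }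
  assert (Hnonneg : forall i, 0 <= nsum_term alpha j m i).
  { intros i; apply Rmult_le_pos; [apply weight_nonneg | apply nsum_bounds].
    apply Rmin_glb; [lra | left; apply inv_succ_pos]. }
  pose proof (term_le_partial_sum _ n Hnonneg).
  pose proof (sum_incr _ n _ (nsum_succ_converges j m (Rlt_le _ _ Hm)) Hnonneg).
  lra.
Qed.

Lemma u_pos (L k : nat) : (0 < k)%nat -> 0 < u alpha L k.
Proof.
  intros Hk; unfold u; apply Rmult_lt_0_compat; [apply lt_0_INR; exact Hk |].
  apply nsum_pos, Rinv_0_lt_compat, lt_0_INR; exact Hk.
Qed.

(* u_k = k nsum(1/k) is nondecreasing because nsum(m)/m is nonincreasing. *)
Lemma u_nondecreasing (L k1 k2 : nat) : (0 < k1 <= k2)%nat -> u alpha L k1 <= u alpha L k2.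
Proof.
  intros Hk; unfold u.
  assert (H1 : 0 < INR k1) by (apply lt_0_INR; lia).
  assert (H12 : INR k1 <= INR k2) by (apply le_INR; lia).
  assert (Hratio : / INR k2 * nsum alpha (L - 1) (/ INR k1)
                   <= / INR k1 * nsum alpha (L - 1) (/ INR k2)).
  { apply nsum_ratio_antitone; split;
      [apply Rinv_0_lt_compat; lra | apply Rinv_le_contravar; lra]. }
  apply Rmult_le_compat_l with (r := INR k1 * INR k2) in Hratio; [| nra].
  replace (INR k1 * INR k2 * (/ INR k2 * nsum alpha (L - 1) (/ INR k1)))
    with (INR k1 * nsum alpha (L - 1) (/ INR k1)) in Hratio by (field; lra).
  replace (INR k1 * INR k2 * (/ INR k1 * nsum alpha (L - 1) (/ INR k2)))
    with (INR k2 * nsum alpha (L - 1) (/ INR k2)) in Hratio by (field; lra).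
  exact Hratio.
Qed.

End NestedSum.

Section PositiveRecursion.

Variables (a v : nat -> R) (c : R).
Hypothesis c_pos : 0 < c.
Hypothesis v_pos : forall k, 0 < v k.
Hypothesis recursion : forall k, a (S k) * v k = c * a k.

Lemma recursion_solved (k : nat) : a (S k) = c * a k / v k.
Proof. rewrite <- recursion; field; pose proof (v_pos k); lra. Qed.

(* A nonnegative solution that is not identically zero is positive everywhere:
   the sign of a_k is transported both forwards and backwards. *)
Lemma recursion_pos :
  (forall k, 0 <= a k) -> (exists k, a k <> 0) -> forall k, 0 < a k.
Proof.
  intros Hnn [k0 Hk0].
  assert (Hdown : forall k, 0 < a k -> 0 < a 0%nat).
  { induction k as [|k IH]; intros Hk; [exact Hk |]; apply IH.
    destruct (Hnn k) as [Hpos | Hzero]; [exact Hpos |].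
    pose proof (recursion k); pose proof (v_pos k); rewrite <- Hzero in *; nra. }
  assert (Ha0 : 0 < a 0%nat) by (apply (Hdown k0); destruct (Hnn k0); [assumption | congruence]).
  induction k as [|k IH]; [exact Ha0 |].
  rewrite recursion_solved; apply Rdiv_lt_0_compat; [nra | apply v_pos].
Qed.

Lemma recursion_ratio (k : nat) : 0 < a k -> a (S k) / a k = c / v k.
Proof. intros Hk; rewrite recursion_solved; field; pose proof (v_pos k); lra. Qed.

Lemma recursion_increase (k : nat) : 0 < a k -> v k < c -> a k < a (S k).
Proof.
  intros Hk Hv; pose proof (recursion k); pose proof (v_pos k).
  apply (Rmult_lt_reg_r (v k)); [lra | nra].
Qed.

Lemma recursion_decrease (k : nat) : 0 <= a k -> c <= v k -> a (S k) <= a k.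
Proof.
  intros Hk Hv; pose proof (recursion k); pose proof (v_pos k).
  apply (Rmult_le_reg_r (v k)); [lra | nra].
Qed.

End PositiveRecursion.

Lemma downward_closed_initial_segment (P : nat -> Prop) (N : nat) :
  (forall k, P (S k) -> P k) -> ~ P N -> exists k0, forall k, P k <-> (k < k0)%nat.
Proof.
  intros Hclosed.
  assert (Hbelow : forall j, P j -> forall k, (k <= j)%nat -> P k).
  { induction j as [|j IH]; intros Hj k Hk.
    - replace k with 0%nat by lia; exact Hj.
    - destruct (Nat.eq_dec k (S j)) as [-> | Hne]; [exact Hj | apply IH; [apply Hclosed, Hj | lia]]. }
  induction N as [|N IH]; intros HN.
  - exists 0%nat; intros k; split; [intros Hk; exfalso; apply HN, (Hbelow k Hk); lia | lia].
  - destruct (classic (P N)) as [HP | HP]; [| exact (IH HP)].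
    exists (S N); intros k; split; intros Hk.
    + destruct (Nat.le_gt_cases k N); [lia |]; exfalso; apply HN, (Hbelow k Hk); lia.
    + apply (Hbelow N HP); lia.
Qed.

Lemma le_of_increasing_upto (a : nat -> R) (n : nat) :
  (forall k, (k < n)%nat -> a k <= a (S k)) -> forall k, (k <= n)%nat -> a k <= a n.
Proof.
  intros Hinc k Hk; remember (n - k)%nat as d eqn:Hd; revert k Hk Hd.
  induction d as [|d IH]; intros k Hk Hd.
  - replace k with n by lia; lra.
  - apply Rle_trans with (a (S k)); [apply Hinc; lia | apply IH; lia].
Qed.

Lemma le_of_decreasing_from (a : nat -> R) (n : nat) :
  (forall k, (n <= k)%nat -> a (S k) <= a k) -> forall k, (n <= k)%nat -> a k <= a n.
Proof.
  intros Hdec k Hk; induction k as [|k IH].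
  - replace n with 0%nat by lia; lra.
  - destruct (Nat.eq_dec n (S k)) as [-> | Hne]; [lra |].
    apply Rle_trans with (a k); [apply Hdec | apply IH]; lia.
Qed.

Lemma unimodal_of_threshold (a : nat -> R) (P : nat -> Prop) (N : nat) :
  (forall k, P (S k) -> P k) -> ~ P N ->
  (forall k, P k -> a k < a (S k)) -> (forall k, ~ P k -> a (S k) <= a k) ->
  exists k0, (forall k, P k <-> (k < k0)%nat) /\ (forall k, a k <= a k0).
Proof.
  intros Hclosed HN Hinc Hdec.
  destruct (downward_closed_initial_segment P N Hclosed HN) as [k0 Hk0].
  exists k0; split; [exact Hk0 |]; intros k.
  destruct (Nat.le_gt_cases k k0) as [Hk | Hk].
  - apply le_of_increasing_upto; [| exact Hk].
    intros i Hi; left; apply Hinc, Hk0, Hi.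
  - apply le_of_decreasing_from; [| lia].
    intros i Hi; apply Hdec; rewrite Hk0; lia.
Qed.

(* A sequence with  k a_k  bounded and a_0 > 0 cannot increase forever:
   otherwise a_k >= a_0 and k a_0 <= B for all k. *)
Lemma eventually_not_increasing (a : nat -> R) (P : nat -> Prop) (B : R) :
  0 < a 0%nat -> (forall k, INR k * a k <= B) -> (forall k, P k -> a k < a (S k)) ->
  exists N, ~ P N.
Proof.
  intros Ha0 Hbound Hinc; apply NNPP; intros Hall.
  assert (Hmin : forall k, a 0%nat <= a k).
  { intros k; apply le_of_increasing_upto; [| lia].
    intros i _; left; apply Hinc, NNPP; intros Hi; apply Hall; exists i; exact Hi. }
  destruct (INR_unbounded (B / a 0%nat)) as [n Hn].
  pose proof (Hbound n); pose proof (Hmin n); pose proof (pos_INR n).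
  assert (B < INR n * a 0%nat).
  { apply Rmult_gt_compat_r with (r := a 0%nat) in Hn; [| lra].
    unfold Rdiv in Hn; rewrite Rmult_assoc, Rinv_l in Hn by lra; lra. }
  nra.
Qed.

Lemma positive_weight (alpha : nat -> R) (abar : R) :
  infinite_sum (fun k => INR k * alpha k) abar -> 0 < abar ->
  exists n, 0 < INR (S n) * alpha (S n).
Proof.
  intros Habar Hpos.
  destruct (Habar abar Hpos) as [N HN]; specialize (HN N (Nat.le_refl N)).
  unfold Rdist in HN; apply Rabs_def2 in HN.
  destruct (positive_term_of_positive_sum (fun k => INR k * alpha k) N ltac:(lra))
    as [[|n] Hn].
  - simpl in Hn; lra.
  - exists n; exact Hn.
Qed.

Theorem mainTheorem5 (L : nat) (rho : R) (alpha : nat -> R) (abar : R)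
  (HL : (2 <= L)%nat) (Hrho : 0 < rho)
  (Hnn : forall k, 0 <= alpha k)
  (Hnz : exists k, alpha k <> 0)
  (Habar : infinite_sum (fun k => INR k * alpha k) abar)
  (Habar_pos : 0 < abar)
  (Hfix : forall k : nat, alpha (S k) * u alpha L (S k) = rho * abar ^ (L - 1) * alpha k) :
  (forall k, 0 < alpha k) /\
  (forall k : nat, alpha (S k) / alpha k = rho * abar ^ (L - 1) / u alpha L (S k)) /\
  (forall k : nat, u alpha L (S k) < rho * abar ^ (L - 1) -> alpha k < alpha (S k)) /\
  (forall k : nat, rho * abar ^ (L - 1) <= u alpha L (S k) -> alpha (S k) <= alpha k) /\
  (exists k0 : nat,
      (forall k : nat, (0 < k)%nat -> (u alpha L k < rho * abar ^ (L - 1) <-> (k <= k0)%nat)) /\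
      (forall k : nat, (k < k0)%nat -> alpha k < alpha (S k)) /\
      (forall k : nat, (k0 <= k)%nat -> alpha (S k) <= alpha k) /\
      (forall k : nat, alpha k <= alpha k0)).
Proof.
  set (c := rho * abar ^ (L - 1)) in *.
  set (v := fun k => u alpha L (S k)).
  assert (Hc : 0 < c) by (apply Rmult_lt_0_compat; [lra | apply pow_lt; lra]).
  assert (Hweights : forall k, 0 <= INR k * alpha k)
    by (intros k; apply Rmult_le_pos; [apply pos_INR | apply Hnn]).
  assert (Hmom : forall n, sum_f_R0 (fun k => INR k * alpha k) n <= abar)
    by (intros n; exact (sum_incr _ n _ Habar Hweights)).
  pose proof (positive_weight alpha abar Habar Habar_pos) as Hw.
  assert (Hv : forall k, 0 < v k) by (intros k; apply (u_pos alpha abar Hnn Hmom Hw); lia).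
  pose proof (recursion_pos alpha v c Hc Hv Hfix Hnn Hnz) as Hpos.
  pose proof (fun k => recursion_increase alpha v c Hv Hfix k (Hpos k)) as Hinc.
  pose proof (fun k => recursion_decrease alpha v c Hv Hfix k (Hnn k)) as Hdec.
  (* alpha cannot increase forever, since k alpha_k <= abar. *)
  assert (Hstop : exists N, ~ v N < c).
  { apply (eventually_not_increasing alpha _ abar (Hpos 0%nat)); [| exact Hinc].
    intros k; eapply Rle_trans; [apply (term_le_partial_sum _ k Hweights) | apply Hmom]. }
  destruct Hstop as [N HN].
  destruct (unimodal_of_threshold alpha (fun k => v k < c) N) as [k0 [Hk0 Hmax]]; auto.
  { intros k Hk.
    assert (v k <= v (S k)) by (apply (u_nondecreasing alpha abar Hnn Hmom); lia).
    lra. }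
  { intros k Hk; apply Hdec; lra. }
  split; [exact Hpos |]; split; [intros k; exact (recursion_ratio alpha v c Hv Hfix k (Hpos k)) |].
  split; [exact Hinc |]; split; [exact Hdec |].
  exists k0; split; [| split; [| split]].
  - intros [|k] Hk; [lia |]; change (v k < c <-> (S k <= k0)%nat); rewrite Hk0; lia.
  - intros k Hk; apply Hinc, Hk0, Hk.
  - intros k Hk; apply Hdec, Rnot_lt_le; rewrite Hk0; lia.
  - exact Hmax.
Qed.
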